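(* There is an absolute constant $C$ such that for all integers $1\le r\le n$ and every graded function $f:\mathbb{I}_n^r\to\mathbb{R}^+$, there exists a real matrix $A$ with $n$ columns and at most $Cnr$ rows such that $\mu_A(J)=f(J)$ for all $J\in\mathbb{I}_n^r$.
   Context: $\mathbb{R}^+$ denotes the positive reals. For integers $i\le j$, $[i:j]=\{i,\dots,j\}$. For integers $r\le n$, $\mathbb{I}_n^r=\{[i:j]:1\le i\le j\le n,\ j<i+r\}$, and $\mathbb{I}_n=\mathbb{I}_n^n$. A function $f:\mathbb{I}_n^r\to\mathbb{R}^+$ is graded if for all $J,J'\in\mathbb{I}_n^r$ with $|J|<|J'|$ one has $f(J)/|J|>f(J')/|J'|$. For a matrix $A=[a_{ij}]$ with $n$ columns, its column-interval maximum prefix sum is $\mu_A:\mathbb{I}_n\to\mathbb{R}$, $\mu_A(J)=\max_{k\ge1}\sum_{i=1}^k\sum_{j\in J}a_{ij}$ (maximum over $k$ ranging over the row indices). *)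

From mathcomp Require Import all_boot all_order all_algebra.
From mathcomp Require Import reals.
Set Implicit Arguments. Unset Strict Implicit. Unset Printing Implicit Defensive.
Import Order.TTheory GRing.Theory Num.Theory.
Local Open Scope ring_scope.

(* The interval [i:j] of column indices (1-based), i.e. columns c : 'I_n with
   i <= c+1 <= j. *)
Definition in_interval (i j : nat) (n : nat) (c : 'I_n) : bool :=
  (i <= c.+1 <= j)%N.

Definition in_Inr (n r i j : nat) : Prop :=
  [/\ (1 <= i)%N, (i <= j)%N, (j <= n)%N & (j < i + r)%N].

Definition ilen (i j : nat) : nat := (j - i).+1.

(* f : I_n^r -> R^+ given as a function on pairs (i,j) (values outside I_n^r
   irrelevant).  Positivity and gradedness. *)
Definition positive_on (R : realFieldType) (n r : nat) (f : nat -> nat -> R) : Prop :=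
  forall i j, in_Inr n r i j -> 0 < f i j.

Definition graded (R : realFieldType) (n r : nat) (f : nat -> nat -> R) : Prop :=
  forall i j i' j', in_Inr n r i j -> in_Inr n r i' j' ->
    (ilen i j < ilen i' j')%N ->
    f i j / (ilen i j)%:R > f i' j' / (ilen i' j')%:R.

Definition prefix_sum (R : realFieldType) (m n : nat) (A : 'M[R]_(m.+1, n))
  (i j : nat) (k : 'I_m.+1) : R :=
  \sum_(a < m.+1 | (a <= k)%N) \sum_(c < n | in_interval i j c) A a c.

Definition mu (R : realFieldType) (m n : nat) (A : 'M[R]_(m.+1, n)) (i j : nat) : R :=
  \big[Num.max/prefix_sum A i j ord0]_(k < m.+1) prefix_sum A i j k.

From mathcomp Require Import all_boot all_order all_algebra.
From mathcomp Require Import reals.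
From mathcomp Require Import zify.
Set Implicit Arguments.
Unset Strict Implicit.
Unset Printing Implicit Defensive.

Import Order.TTheory GRing.Theory Num.Theory.
Local Open Scope ring_scope.

(* For an interval J put the weight f(J)/|J| on every column of J and -f(J)
   on every other column.  Summed over an interval J' these weights give
   |J'| f(J)/|J| <= f(J') if J' is inside J (gradedness), with equality when
   J' = J, and a nonpositive number otherwise.  A matrix whose successive
   prefix sums are the weight vectors of the n r intervals of I_n^r (its rows
   are their consecutive differences) therefore has mu_A = f. *)

Definition interval_set (n i j : nat) : {set 'I_n} := [set c | in_interval i j c].

Lemma card_interval_set n i j :
  (1 <= i)%N -> #|interval_set n i j| = ((minn n j).+1 - i)%N.
Proof.
move=> i_gt0; rewrite -sum1_card (eq_bigl (@in_interval i j n)) => [|c]; last first.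
  by rewrite inE.
elim: n => [|n IHn]; first by rewrite big_ord0; lia.
by rewrite big_mkcond big_ord_recr /= -big_mkcond IHn /in_interval /=; case: ifP; lia.
Qed.

Lemma card_interval_set_ilen n i j :
  (1 <= i)%N -> (i <= j)%N -> (j <= n)%N -> #|interval_set n i j| = ilen i j.
Proof. by move=> i_gt0 le_ij le_jn; rewrite card_interval_set // /ilen; lia. Qed.

Lemma interval_set_subset n i j i' j' :
  (1 <= i')%N -> (i' <= j')%N -> (j' <= n)%N ->
  interval_set n i' j' \subset interval_set n i j -> (i <= i')%N && (j' <= j)%N.
Proof.
move=> i'_gt0 le_i'j' le_j'n /subsetP sub.
have lt_i'n : (i'.-1 < n)%N by lia.
have lt_j'n : (j'.-1 < n)%N by lia.
have := sub (Ordinal lt_i'n); have := sub (Ordinal lt_j'n).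
rewrite !inE /in_interval /=; lia.
Qed.

Section SetWeight.
Variables (R : realFieldType) (T : finType).
Implicit Types (A B : {set T}) (x : R).

Definition set_weight A x (c : T) : R := if c \in A then x / #|A|%:R else - x.

Lemma sum_set_weight A B x :
  \sum_(c in B) set_weight A x c = x / #|A|%:R *+ #|B :&: A| - x *+ #|B :\: A|.
Proof.
rewrite -(sumr_const (mem (B :&: A))) -(sumr_const (mem (B :\: A))) -sumrN.
rewrite (bigID (mem A)) /=; congr (_ + _).
  by apply: eq_big => [c|c /andP[_ cA]]; rewrite ?inE // /set_weight cA.
by apply: eq_big => [c|c /andP[_ /negbTE nAc]]; rewrite ?inE 1?andbC // /set_weight nAc.
Qed.

Lemma sum_set_weight_sub A B x :
  B \subset A -> \sum_(c in B) set_weight A x c = x / #|A|%:R *+ #|B|.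
Proof.
move=> subBA; rewrite sum_set_weight (setIidPl subBA).
by move: subBA; rewrite -setD_eq0 => /eqP ->; rewrite cards0 subr0.
Qed.

Lemma sum_set_weight_le0 A B x :
  0 <= x -> ~~ (B \subset A) -> \sum_(c in B) set_weight A x c <= 0.
Proof.
move=> x_ge0 nsubBA; rewrite sum_set_weight subr_le0.
have le_BA_A : (#|B :&: A| <= #|A|)%N by rewrite subset_leq_card ?subsetIr.
have : x / #|A|%:R *+ #|B :&: A| <= x.
  have [->|A_gt0] := posnP #|A|; first by rewrite invr0 mulr0 mul0rn.
  by rewrite -mulr_natr mulrAC ler_pdivrMr ?ltr0n // ler_wpM2l ?ler_nat.
move/le_trans; apply.
have : (0 < #|B :\: A|)%N by rewrite card_gt0 setD_eq0.
by case: #|_| => // k _; rewrite mulrS lerDl mulrn_wge0.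
Qed.

End SetWeight.

Section IntervalWeight.
Variables (R : realFieldType) (n r : nat) (f : nat -> nat -> R).
Hypotheses (f_gt0 : positive_on n r f) (f_graded : graded n r f).

Definition interval_weight i j : 'I_n -> R := set_weight (interval_set n i j) (f i j).

Lemma sum_interval_weight_diag i j : in_Inr n r i j ->
  \sum_(c in interval_set n i j) interval_weight i j c = f i j.
Proof.
case=> i_gt0 le_ij le_jn _.
rewrite sum_set_weight_sub // card_interval_set_ilen //.
by rewrite -mulr_natr divfK ?pnatr_eq0.
Qed.

Lemma sum_interval_weight_le i j i' j' : in_Inr n r i j -> in_Inr n r i' j' ->
  \sum_(c in interval_set n i' j') interval_weight i j c <= f i' j'.
Proof.
move=> Jij Ji'j'; have fJ_gt0 := f_gt0 Jij; have fJ'_gt0 := f_gt0 Ji'j'.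
have [subJ'J|nsubJ'J] :=
  boolP (interval_set n i' j' \subset interval_set n i j); last first.
  by apply: le_trans (sum_set_weight_le0 (ltW fJ_gt0) nsubJ'J) (ltW fJ'_gt0).
have [i_gt0 le_ij le_jn _] := Jij; have [i'_gt0 le_i'j' le_j'n _] := Ji'j'.
have /andP[le_ii' le_j'j] := interval_set_subset i'_gt0 le_i'j' le_j'n subJ'J.
rewrite sum_set_weight_sub // !card_interval_set_ilen // -mulr_natr.
have [lt_len|ge_len] := ltnP (ilen i' j') (ilen i j).
  by have := f_graded Ji'j' Jij lt_len; rewrite ltr_pdivlMr ?ltr0n // => /ltW.
have [-> ->] : i = i' /\ j = j' by move: ge_len; rewrite /ilen; lia.
by rewrite divfK ?pnatr_eq0.
Qed.

End IntervalWeight.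

Section PrefixSums.
Variables (R : realFieldType) (m n : nat).

Lemma mu_eq_attained (A : 'M[R]_(m.+1, n)) i j y (k0 : 'I_m.+1) :
  (forall k, prefix_sum A i j k <= y) -> prefix_sum A i j k0 = y -> mu A i j = y.
Proof.
move=> ub attained; apply/le_anti/andP; split; last by rewrite -attained le_bigmax.
by apply: bigmax_le => [|k _]; apply: ub.
Qed.

Definition diff_mx (w : nat -> 'I_n -> R) : 'M[R]_(m.+1, n) :=
  \matrix_(a < m.+1, c < n) (w a c - w a.-1 c *+ (0 < a)%N).

Lemma telescope_diff (w : nat -> 'I_n -> R) c k :
  \sum_(a < k.+1) (w a c - w a.-1 c *+ (0 < a)%N) = w k c.
Proof.
elim: k => [|k IHk]; first by rewrite big_ord1 subr0.
by rewrite big_ord_recr IHk /= addrC subrK.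
Qed.

Lemma prefix_sum_diff_mx w i j (k : 'I_m.+1) :
  prefix_sum (diff_mx w) i j k = \sum_(c in interval_set n i j) w k c.
Proof.
rewrite /prefix_sum exchange_big; apply: eq_big => [c|c _]; first by rewrite inE.
rewrite -(telescope_diff w c).
rewrite (big_ord_widen m.+1 (fun a => w a c - w a.-1 c *+ (0 < a)%N) (ltn_ord k)).
by apply: eq_bigr => a _; rewrite mxE.
Qed.

End PrefixSums.

Definition interval_of_index (r k : nat) : nat * nat :=
  ((k %/ r).+1, (k %/ r + k %% r).+1).

Lemma in_Inr_interval_of_index n r k i j :
  (0 < r)%N -> interval_of_index r k = (i, j) -> (j <= n)%N -> in_Inr n r i j.
Proof.
by move=> r_gt0 [<- <-] le_jn; have lt_mod := ltn_pmod k r_gt0; split => //; lia.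
Qed.

Lemma interval_of_index_surj n r i j :
  in_Inr n r i j -> exists2 k, (k < n * r)%N & interval_of_index r k = (i, j).
Proof.
case=> i_gt0 le_ij le_jn lt_j_ir; exists (i.-1 * r + (j - i))%N; first by nia.
have lt_ji_r : (j - i < r)%N by lia.
rewrite /interval_of_index divnMDl ?divn_small ?modnMDl ?modn_small //; last by lia.
by congr (_, _); lia.
Qed.

Definition interval_row (R : realFieldType) n r (f : nat -> nat -> R) k : 'I_n -> R :=
  let: (i, j) := interval_of_index r k in
  if (j <= n)%N then interval_weight f i j else fun=> 0.

Lemma graded_mu_realizable (R : realFieldType) n r (f : nat -> nat -> R) :
  (0 < n)%N -> (0 < r)%N -> positive_on n r f -> graded n r f ->
  exists (m : nat) (A : 'M[R]_(m.+1, n)),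
    m.+1 = (n * r)%N /\ forall i j, in_Inr n r i j -> mu A i j = f i j.
Proof.
move=> n_gt0 r_gt0 f_gt0 f_graded.
have size_A : (n * r).-1.+1 = (n * r)%N by rewrite prednK // muln_gt0 n_gt0.
exists (n * r).-1, (diff_mx (n * r).-1 (interval_row r f)); split => // i j Jij.
have [k lt_k_nr kJ] := interval_of_index_surj Jij.
apply: (mu_eq_attained (k0 := inord k)) => [k'|].
  rewrite prefix_sum_diff_mx /interval_row.
  case k'J': (interval_of_index r k') => [i' j']; case: ifP => [le_j'n|_].
    have Ji'j' := in_Inr_interval_of_index r_gt0 k'J' le_j'n.
    exact: (sum_interval_weight_le f_gt0 f_graded Ji'j' Jij).
  by rewrite big1 // ltW ?f_gt0.
rewrite prefix_sum_diff_mx /interval_row inordK ?size_A // kJ.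
by have [_ _ -> _] := Jij; rewrite (sum_interval_weight_diag f Jij).
Qed.

Theorem lemma6p5 :
  exists C : nat,
  forall (R : realType) (n r : nat) (f : nat -> nat -> R),
    (1 <= r)%N -> (r <= n)%N ->
    positive_on n r f -> graded n r f ->
    exists (m : nat) (A : 'M[R]_(m.+1, n)),
      (m.+1 <= C * n * r)%N /\
      forall i j, in_Inr n r i j -> mu A i j = f i j.
Proof.
exists 1%N => R n r f r_gt0 le_rn f_gt0 f_graded.
have n_gt0 : (0 < n)%N by apply: leq_trans le_rn.
have [m [A [size_A mu_A]]] := graded_mu_realizable n_gt0 r_gt0 f_gt0 f_graded.
by exists m, A; rewrite mul1n size_A.
Qed.
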